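(* Let $f \in \mathcal{S}^1_{\mu,L}(\mathbb{R}^d)$ with $0<\mu\le L$, let $x^\star$ be its unique minimizer, let $r\ge 2$, $0<s<1/L$, and $K := \max\left\{0, \frac{3r^2 - 4r - 12}{8}\right\}$. Let $\{x_k\},\{y_k\},\{z_k\}$ be generated by M-NAG from $x_0=y_0\in\mathbb{R}^d$, and for integers $k\ge 0$ define \[ \mathcal{E}(k) := s(k+1)(k+r+1)\big(f(x_{k+1}) - f(x^\star)\big) + \frac12\Big\|k(y_k - x_k) + r(y_k - x^\star) - (k+r)s\nabla f(y_k)\Big\|^2 . \] Then for every integer $k\ge K$, \[ \mathcal{E}(k+1) - \mathcal{E}(k) \le -\mu s\cdot\frac{1 - Ls}{4}\cdot \mathcal{E}(k+1). \]
   Context: $\mathcal{S}^1_{\mu,L}(\mathbb{R}^d)$ denotes the class of continuously differentiable convex functions $f:\mathbb{R}^d\to\mathbb{R}$ whose gradient is $L$-Lipschitz and which are $\mu$-strongly convex, $f(y)\ge f(x)+\langle\nabla f(x),y-x\rangle+\frac{\mu}{2}\|y-x\|^2$ for all $x,y$. M-NAG with step size $s$ and momentum parameter $r$ is the iteration, for $k \ge 0$: $z_k = y_k - s\nabla f(y_k)$; $\; x_{k+1} = z_k$ if $f(z_k)\le f(x_k)$ and $x_{k+1} = x_k$ otherwise; $\; y_{k+1} = x_{k+1} + \frac{k}{k+r+1}(x_{k+1} - x_k) + \frac{k+r}{k+r+1}(z_k - x_{k+1})$. *)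

From HB Require Import structures.
From mathcomp Require Import all_boot all_order all_algebra.
From mathcomp Require Import all_classical all_reals all_analysis.
Set Implicit Arguments. Unset Strict Implicit. Unset Printing Implicit Defensive.
Import Order.TTheory GRing.Theory Num.Theory.
Import numFieldNormedType.Exports.
Local Open Scope ring_scope.

Section Defs.
Variables (R : realType) (d : nat).
Notation V := 'rV[R]_d.

Definition dotv (u v : V) : R := (u *m v^T) 0 0.
Definition enorm (u : V) : R := Num.sqrt (dotv u u).

Definition is_gradient (f : V -> R) (g : V -> V) : Prop :=
  forall x, differentiable f x /\ forall h, 'd f x h = dotv (g x) h.

Definition in_S1 (mu L : R) (f : V -> R) (g : V -> V) : Prop :=
  [/\ is_gradient f g, continuous g,
      (forall x y, enorm (g x - g y) <= L * enorm (x - y))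
    & (forall x y, f x + dotv (g x) (y - x) + mu / 2 * dotv (y - x) (y - x) <= f y)].

Definition mnag_step (f : V -> R) (g : V -> V) (s r : R) (k : nat) (xy : V * V)
  : V * V :=
  let: (x, y) := xy in
  let z := y - s *: g y in
  let x' := if f z <= f x then z else x in
  let y' := x' + (k%:R / (k%:R + r + 1)) *: (x' - x)
               + ((k%:R + r) / (k%:R + r + 1)) *: (z - x') in
  (x', y').

Fixpoint mnag (f : V -> R) (g : V -> V) (s r : R) (x0 : V) (k : nat) : V * V :=
  match k with
  | 0 => (x0, x0)
  | k'.+1 => mnag_step f g s r k' (mnag f g s r x0 k')
  end.

Definition mx f g s r x0 k := (mnag f g s r x0 k).1.
Definition my f g s r x0 k := (mnag f g s r x0 k).2.

Definition energy (f : V -> R) (g : V -> V) (s r : R) (x0 xstar : V) (k : nat) : R :=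
  let xk := mx f g s r x0 k in
  let yk := my f g s r x0 k in
  s * (k%:R + 1) * (k%:R + r + 1) * (f (mx f g s r x0 k.+1) - f xstar)
  + 1 / 2 * (let w := k%:R *: (yk - xk) + r *: (yk - xstar) - ((k%:R + r) * s) *: g yk
             in dotv w w).
End Defs.

From HB Require Import structures.
From mathcomp Require Import all_boot all_order all_algebra.
From mathcomp Require Import all_classical all_reals all_analysis.
From mathcomp Require Import ring lra.
Set Implicit Arguments. Unset Strict Implicit. Unset Printing Implicit Defensive.
Import Order.TTheory GRing.Theory Num.Theory.
Local Open Scope ring_scope.

(* Write [n = k + 1], [X = x_(k+1)], [Y = y_(k+1)].  The momentum update turns the
   vector inside E(k) into [w = n (Y - X) + r (Y - xstar)], and the one inside E(k+1)
   is [w - (n + r) s g(Y)].  Expanding the square, the cross term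
   [-2 (n + r) s <g(Y), w>] is paid for by strong convexity at Y towards X (weight n)
   and towards xstar (weight r), the descent lemma for the gradient step from Y pays
   for [(n + r)^2 s^2 |g(Y)|^2], and r >= 2 gives [(n + 1)(n + r + 1) <= (n + r)^2].
   Hence E(k+1) - E(k) <= -(mu s (n + r) / 2) (n |Y - X|^2 + r |Y - xstar|^2)
   - (s^2 (n + r)^2 (1 - L s) / 2) |g(Y)|^2.  Bounding mu E(k+1) by the same three
   squares, via [mu (f Y - f xstar) <= |g(Y)|^2 / 2] and
   [|a + b + c|^2 <= 3 (|a|^2 + |b|^2 + |c|^2)], gives the contraction.  This crude
   bound already works for every k. *)

Section InnerProduct.
Variables (R : realType) (d : nat).
Notation V := 'rV[R]_d.
Implicit Types u v w : V.

Lemma dotvE u v : dotv u v = \sum_(i < d) u 0 i * v 0 i.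
Proof. by rewrite /dotv !mxE; apply: eq_bigr => i _; rewrite mxE. Qed.

Lemma dotvC u v : dotv u v = dotv v u.
Proof. by rewrite !dotvE; apply: eq_bigr => i _; rewrite mulrC. Qed.

Lemma dotvDl u v w : dotv (u + v) w = dotv u w + dotv v w.
Proof. by rewrite !dotvE -big_split; apply: eq_bigr => i _; rewrite mxE mulrDl. Qed.

Lemma dotvZl a u v : dotv (a *: u) v = a * dotv u v.
Proof. by rewrite !dotvE mulr_sumr; apply: eq_bigr => i _; rewrite mxE mulrA. Qed.

Lemma dotvNl u v : dotv (- u) v = - dotv u v.
Proof. by rewrite -scaleN1r dotvZl mulN1r. Qed.

Lemma dotvBl u v w : dotv (u - v) w = dotv u w - dotv v w.
Proof. by rewrite dotvDl dotvNl. Qed.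

Lemma dotvDr u v w : dotv w (u + v) = dotv w u + dotv w v.
Proof. by rewrite !(dotvC w) dotvDl. Qed.

Lemma dotvZr a u v : dotv v (a *: u) = a * dotv v u.
Proof. by rewrite !(dotvC v) dotvZl. Qed.

Lemma dotvNr u v : dotv v (- u) = - dotv v u.
Proof. by rewrite !(dotvC v) dotvNl. Qed.

Lemma dotvBr u v w : dotv w (u - v) = dotv w u - dotv w v.
Proof. by rewrite dotvDr dotvNr. Qed.

Definition dotvE_lin := (dotvDl, dotvBl, dotvZl, dotvNl, dotvDr, dotvBr, dotvZr, dotvNr).

Lemma dotv_ge0 u : 0 <= dotv u u.
Proof. by rewrite dotvE; apply: sumr_ge0 => i _; rewrite -expr2 sqr_ge0. Qed.

Lemma dotvZZ a u : dotv (a *: u) (a *: u) = a ^+ 2 * dotv u u.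
Proof. by rewrite dotvZl dotvZr mulrA -expr2. Qed.

Lemma dotv_subZ c u v :
  dotv (u - c *: v) (u - c *: v) = dotv u u - 2 * c * dotv v u + c ^+ 2 * dotv v v.
Proof. rewrite !dotvE_lin (dotvC u v); ring. Qed.

Lemma dotv_young l u v : 0 < l -> 2 * dotv u v <= l * dotv u u + l^-1 * dotv v v.
Proof.
move=> l_gt0; have := dotv_ge0 (l *: u - v); rewrite !dotvE_lin (dotvC v u) => sq_ge0.
rewrite -(ler_pM2l l_gt0) mulrDr (mulrA l l^-1) divff ?gt_eqF // mul1r; lra.
Qed.

Lemma dotv_young1 u v : 2 * dotv u v <= dotv u u + dotv v v.
Proof. by have := @dotv_young 1 u v ltr01; rewrite invr1 !mul1r. Qed.

Lemma dotv_le_sqr c u v : 0 < c -> dotv u u <= c ^+ 2 * dotv v v ->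
  dotv u v <= c * dotv v v.
Proof.
move=> c_gt0 le_uv; have := @dotv_young c^-1 u v; rewrite invr_gt0 invrK => /(_ c_gt0).
have : c^-1 * dotv u u <= c * dotv v v.
  by rewrite ler_pdivrMl // mulrA -expr2.
lra.
Qed.

Lemma dotv_sum3_le u v w :
  dotv (u + v + w) (u + v + w) <= 3 * (dotv u u + dotv v v + dotv w w).
Proof.
have := dotv_young1 u v; have := dotv_young1 u w; have := dotv_young1 v w.
rewrite !dotvE_lin (dotvC v u) (dotvC w u) (dotvC w v); lra.
Qed.

Lemma enorm_le_sqr c u v : 0 <= c -> enorm u <= c * enorm v ->
  dotv u u <= c ^+ 2 * dotv v v.
Proof.
move=> c_ge0 le_uv; have nu_ge0 : 0 <= enorm u by exact: sqrtr_ge0.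
have := ler_pM nu_ge0 nu_ge0 le_uv le_uv.
by rewrite -!expr2 exprMn !sqr_sqrtr ?dotv_ge0.
Qed.

End InnerProduct.

Lemma le0_if_le_divn (R : realType) (a b : R) :
  0 <= b -> (forall N : nat, (0 < N)%N -> a <= b / N%:R) -> a <= 0.
Proof.
move=> b_ge0 le_ab; rewrite leNgt; apply/negP => a_gt0.
set N := (Num.truncn (b / a)).+1.
have N_gt0 : 0 < N%:R :> R by rewrite ltr0n.
have := le_ab N isT; rewrite ler_pdivlMr //.
have := truncnS_gt (b / a); rewrite -/N ltr_pdivrMr //; lra.
Qed.

Section Descent.
Variables (R : realType) (d : nat).
Notation V := 'rV[R]_d.
Variables (f : V -> R) (g : V -> V) (L : R).
Hypothesis L_gt0 : 0 < L.
Hypothesis gradient_le : forall x y, f x + dotv (g x) (y - x) <= f y.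
Hypothesis lipschitz_g :
  forall x y, dotv (g x - g y) (g x - g y) <= L ^+ 2 * dotv (x - y) (x - y).

(* Telescoping the gradient inequality along the grid [y + (m/N) h]: each step of
   length [|h|/N] costs at most [<g y, h>/N] plus the Lipschitz error [L (m+1)|h|^2/N^2].
   Letting N grow gives the descent lemma without differentiating f. *)
Lemma descent_grid (y h : V) (N m : nat) : (0 < N)%N ->
  f (y + (m%:R / N%:R) *: h) - f y <=
   m%:R / N%:R * dotv (g y) h + L * dotv h h * (m%:R * (m%:R + 1)) / (2 * N%:R ^+ 2).
Proof.
move=> N_gt0; have N_neq0 : N%:R != 0 :> R by rewrite pnatr_eq0 -lt0n.
elim: m => [|m IHm].
  by rewrite mul0r scale0r addr0 subrr !mul0r mulr0 mul0r addr0.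
set t := (m%:R / N%:R : R); set t' := (m.+1%:R / N%:R : R).
set P := y + t *: h; set P' := y + t' *: h.
move: IHm; rewrite -/t -/P => IHm.
have t'_gt0 : 0 < t' by rewrite divr_gt0 ?ltr0n // lt0n.
have back_step : P - P' = (- N%:R^-1) *: h.
  by apply/rowP => j; rewrite !mxE /t /t' -natr1; field.
have grad_P' : dotv (g P') h <= dotv (g y) h + L * t' * dotv h h.
  have lip : dotv (g P' - g y) (g P' - g y) <= (L * t') ^+ 2 * dotv h h.
    have -> : (L * t') ^+ 2 * dotv h h = L ^+ 2 * dotv (P' - y) (P' - y).
      by rewrite /P' addrC addKr dotvZZ exprMn mulrA.
    exact: lipschitz_g.
  have := dotv_le_sqr (mulr_gt0 L_gt0 t'_gt0) lip; rewrite dotvBl; lra.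
have convex_back := gradient_le P' P; rewrite back_step dotvZr in convex_back.
have N_inv_gt0 : 0 < N%:R^-1 :> R by rewrite invr_gt0 ltr0n.
have grad_P'_scaled := ler_wpM2l (ltW N_inv_gt0) grad_P'.
have t'E : t' = t + N%:R^-1 by rewrite /t /t' -natr1; field.
have costE : L * dotv h h * (m.+1%:R * (m.+1%:R + 1)) / (2 * N%:R ^+ 2) =
  L * dotv h h * (m%:R * (m%:R + 1)) / (2 * N%:R ^+ 2)
  + N%:R^-1 * (L * t' * dotv h h).
  by rewrite t'E /t -natr1; field.
rewrite costE; rewrite t'E in grad_P'_scaled *; lra.
Qed.

Lemma descent (y h : V) : f (y + h) <= f y + dotv (g y) h + L / 2 * dotv h h.
Proof.
rewrite -subr_ge0 -oppr_le0 opprB.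
apply: (@le0_if_le_divn _ _ (L * dotv h h / 2)).
  by rewrite divr_ge0 // mulr_ge0 ?dotv_ge0 // ltW.
move=> N N_gt0; have N_neq0 : N%:R != 0 :> R by rewrite pnatr_eq0 -lt0n.
have := descent_grid y h N N_gt0; rewrite divff // scale1r mul1r.
have -> : L * dotv h h * (N%:R * (N%:R + 1)) / (2 * N%:R ^+ 2) =
  L / 2 * dotv h h + L * dotv h h / 2 / N%:R by field.
lra.
Qed.

End Descent.

Section Lyapunov.
Variables (R : realType) (d : nat).
Notation V := 'rV[R]_d.
Variables (f : V -> R) (g : V -> V) (mu L s r : R) (xstar : V).
Hypothesis mu_gt0 : 0 < mu.
Hypothesis mu_le_L : mu <= L.
Hypothesis s_gt0 : 0 < s.
Hypothesis Ls_lt1 : L * s < 1.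
Hypothesis r_ge2 : 2 <= r.
Hypothesis strongly_convex :
  forall x y, f x + dotv (g x) (y - x) + mu / 2 * dotv (y - x) (y - x) <= f y.
Hypothesis lipschitz_g :
  forall x y, dotv (g x - g y) (g x - g y) <= L ^+ 2 * dotv (x - y) (x - y).
Hypothesis xstar_min : forall x, f xstar <= f x.

Lemma gradient_step_le (y : V) :
  f (y - s *: g y) <= f y - s * (1 - L * s / 2) * dotv (g y) (g y).
Proof.
have convex x z : f x + dotv (g x) (z - x) <= f z.
  have := strongly_convex x z; have := dotv_ge0 (z - x).
  have : 0 <= mu / 2 by rewrite divr_ge0 ?ltW.
  nra.
have := descent (lt_le_trans mu_gt0 mu_le_L) convex lipschitz_g y (- (s *: g y)).
rewrite !dotvE_lin; lra.
Qed.

Lemma strongly_convex_le (x y : V) :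
  f y + mu / 2 * dotv (y - x) (y - x) <= f x + dotv (g y) (y - x).
Proof.
have := strongly_convex y x; rewrite -(opprB y x) dotvNr dotvNl dotvNr opprK; lra.
Qed.

Lemma sub_min_le_sqr_gradient (y : V) :
  mu * (f y - f xstar) <= dotv (g y) (g y) / 2.
Proof.
have young : 2 * dotv (g y) (y - xstar) <=
    mu^-1 * dotv (g y) (g y) + mu * dotv (y - xstar) (y - xstar).
  by have := @dotv_young _ _ mu^-1 (g y) (y - xstar); rewrite invr_gt0 invrK; apply.
have sc := strongly_convex_le xstar y.
have gap : f y - f xstar <= mu^-1 * dotv (g y) (g y) / 2 by lra.
have -> : dotv (g y) (g y) / 2 = mu * (mu^-1 * dotv (g y) (g y) / 2).
  by field; exact: lt0r_neq0.
by rewrite ler_pM2l.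
Qed.

Definition lyap (n fx : R) (w : V) : R :=
  s * n * (n + r) * (fx - f xstar) + 1 / 2 * dotv w w.

Variables (n : R) (X Y X' : V).
Hypothesis n_ge0 : 0 <= n.
Hypothesis X'_le : f X' <= f (Y - s *: g Y).

Let w := n *: (Y - X) + r *: (Y - xstar).
Let w' := w - ((n + r) * s) *: g Y.

Lemma momentum_coef_le : (n + 1) * (n + 1 + r) <= (n + r) ^+ 2.
Proof.
have -> : (n + r) ^+ 2 = (n + 1) * (n + 1 + r) + ((r - 2) * (n + r + 1) + 1) by ring.
have r2_ge0 : 0 <= r - 2 by rewrite subr_ge0.
by rewrite lerDl addr_ge0 // mulr_ge0 // !addr_ge0 // (le_trans _ r_ge2).
Qed.

Lemma gap_next_le : s * (n + 1) * (n + 1 + r) * (f X' - f xstar) <=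
  s * (n + r) ^+ 2 * (f Y - f xstar - s * (1 - L * s / 2) * dotv (g Y) (g Y)).
Proof.
have s_ge0 := ltW s_gt0.
have desc : f X' <= f Y - s * (1 - L * s / 2) * dotv (g Y) (g Y).
  exact: le_trans X'_le (gradient_step_le Y).
have gap_ge0 : 0 <= f X' - f xstar by rewrite subr_ge0 xstar_min.
have := ler_wpM2l s_ge0 (ler_wpM2r gap_ge0 momentum_coef_le).
have := ler_wpM2l (mulr_ge0 s_ge0 (sqr_ge0 (n + r))) desc.
lra.
Qed.

Lemma lyap_step_le :
  lyap (n + 1) (f X') w' - lyap n (f X) w <=
  - (s * (n + r) * mu / 2 * (n * dotv (Y - X) (Y - X) + r * dotv (Y - xstar) (Y - xstar)))
  - s ^+ 2 * (n + r) ^+ 2 * (1 - L * s) / 2 * dotv (g Y) (g Y).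
Proof.
have r_ge0 : 0 <= r := le_trans (ler0n R 2) r_ge2.
have A_ge0 : 0 <= n + r := addr_ge0 n_ge0 r_ge0.
have s_ge0 := ltW s_gt0.
have gap_le := gap_next_le.
have sc_X := ler_wpM2l (mulr_ge0 (mulr_ge0 s_ge0 n_ge0) A_ge0) (strongly_convex_le X Y).
have sc_xstar :=
  ler_wpM2l (mulr_ge0 (mulr_ge0 s_ge0 r_ge0) A_ge0) (strongly_convex_le xstar Y).
have gY_w : dotv (g Y) w = n * dotv (g Y) (Y - X) + r * dotv (g Y) (Y - xstar).
  by rewrite (dotvDr (n *: (Y - X))) !dotvZr.
rewrite /lyap /w' dotv_subZ gY_w; lra.
Qed.

Lemma lyap_next_le :
  mu * lyap (n + 1) (f X') w' <= s * (n + r) ^+ 2 * dotv (g Y) (g Y) / 2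
  + 3 * mu / 2 * (n ^+ 2 * dotv (Y - X) (Y - X) + r ^+ 2 * dotv (Y - xstar) (Y - xstar)
                  + (n + r) ^+ 2 * s ^+ 2 * dotv (g Y) (g Y)).
Proof.
have mu_ge0 := ltW mu_gt0.
have coef_ge0 : 0 <= s * (n + r) ^+ 2 := mulr_ge0 (ltW s_gt0) (sqr_ge0 _).
have gap_le : s * (n + 1) * (n + 1 + r) * (f X' - f xstar) <= s * (n + r) ^+ 2 *
    (f Y - f xstar).
  apply: (le_trans gap_next_le); rewrite ler_wpM2l // lerBlDr lerDl.
  by rewrite !mulr_ge0 ?dotv_ge0 ?(ltW s_gt0) //; move: Ls_lt1; lra.
have := ler_wpM2l mu_ge0 gap_le.
have := ler_wpM2l coef_ge0 (sub_min_le_sqr_gradient Y).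
have := dotv_sum3_le (n *: (Y - X)) (r *: (Y - xstar)) (- (((n + r) * s) *: g Y)).
rewrite dotvNl dotvNr opprK !dotvZZ exprMn => /(ler_wpM2l mu_ge0).
rewrite /lyap /w' /w; lra.
Qed.

Lemma lyap_contraction :
  lyap (n + 1) (f X') w' - lyap n (f X) w <=
  - (mu * s * ((1 - L * s) / 4) * lyap (n + 1) (f X') w').
Proof.
have r_ge0 : 0 <= r := le_trans (ler0n R 2) r_ge2.
have Ls_ge0 : 0 <= L * s := mulr_ge0 (le_trans (ltW mu_gt0) mu_le_L) (ltW s_gt0).
have mus_ge0 : 0 <= mu * s := mulr_ge0 (ltW mu_gt0) (ltW s_gt0).
have oneBLs_ge0 : 0 <= 1 - L * s by rewrite subr_ge0 ltW.
have oneBmus_ge0 : 0 <= 1 - mu * s.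
  by rewrite subr_ge0 (le_trans (ler_wpM2r (ltW s_gt0) mu_le_L)) // ltW.
have c_ge0 : 0 <= s * ((1 - L * s) / 4) by rewrite mulr_ge0 ?divr_ge0 // ltW.
have := ler_wpM2l c_ge0 lyap_next_le.
have := lyap_step_le.
have : 0 <= mu * s * n * dotv (Y - X) (Y - X) * (4 * (n + r) - 3 * (1 - L * s) * n).
  apply: mulr_ge0; first exact: mulr_ge0 (mulr_ge0 mus_ge0 n_ge0) (dotv_ge0 _).
  have := mulr_ge0 Ls_ge0 n_ge0; move: n_ge0; lra.
have : 0 <= mu * s * r * dotv (Y - xstar) (Y - xstar) * (4 * (n + r) - 3 * (1 - L * s) * r).
  apply: mulr_ge0; first exact: mulr_ge0 (mulr_ge0 mus_ge0 r_ge0) (dotv_ge0 _).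
  have := mulr_ge0 Ls_ge0 r_ge0; move: n_ge0; lra.
have : 0 <= (s * (n + r)) ^+ 2 * dotv (g Y) (g Y) * (1 - L * s) * (1 - mu * s).
  exact: mulr_ge0 (mulr_ge0 (mulr_ge0 (sqr_ge0 _) (dotv_ge0 _)) oneBLs_ge0) oneBmus_ge0.
lra.
Qed.

End Lyapunov.

Section MNAG.
Variables (R : realType) (d : nat).
Notation V := 'rV[R]_d.
Variables (f : V -> R) (g : V -> V) (s r : R) (x0 xstar : V).

Notation x := (mx f g s r x0).
Notation y := (my f g s r x0).

Lemma mnag_x_le k : f (x k.+1) <= f (y k - s *: g (y k)).
Proof.
rewrite /mx /my /=; case: (mnag f g s r x0 k) => xk yk /=.
by case: ifPn => //; rewrite -ltNge => /ltW.
Qed.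

Lemma mnag_momentum k : 0 <= r ->
  k%:R *: (y k - x k) + r *: (y k - xstar) - ((k%:R + r) * s) *: g (y k) =
  k.+1%:R *: (y k.+1 - x k.+1) + r *: (y k.+1 - xstar).
Proof.
move=> r_ge0; have k_r1_neq0 : k%:R + r + 1 != 0.
  by rewrite gt_eqF // ltr_wpDl ?addr_ge0.
rewrite /mx /my /=; case: (mnag f g s r x0 k) => xk yk /=.
set x' := if _ then _ else _.
by apply/rowP => j; rewrite -natr1 !mxE; field.
Qed.

Lemma energy_lyap k : energy f g s r x0 xstar k =
  lyap f s r xstar (k%:R + 1) (f (x k.+1))
    (k%:R *: (y k - x k) + r *: (y k - xstar) - ((k%:R + r) * s) *: g (y k)).
Proof. by rewrite /energy /lyap addrAC. Qed.

End MNAG.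

Theorem mainTheorem6 (R : realType) (d : nat) (f : 'rV[R]_d -> R)
  (g : 'rV[R]_d -> 'rV[R]_d) (mu L : R) (xstar x0 : 'rV[R]_d) (r s : R) :
  0 < mu -> mu <= L -> in_S1 mu L f g ->
  (forall x, f xstar <= f x) ->
  2 <= r -> 0 < s -> s < 1 / L ->
  forall k : nat, Num.max 0 ((3 * r ^+ 2 - 4 * r - 12) / 8) <= k%:R ->
  energy f g s r x0 xstar k.+1 - energy f g s r x0 xstar k
    <= - (mu * s * ((1 - L * s) / 4) * energy f g s r x0 xstar k.+1).
Proof.
move=> mu_gt0 mu_le_L [_ _ lipschitz_g strongly_convex] xstar_min r_ge2 s_gt0 s_lt_invL k _.
have L_gt0 : 0 < L := lt_le_trans mu_gt0 mu_le_L.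
have Ls_lt1 : L * s < 1 by rewrite mulrC -ltr_pdivlMr.
have lipschitz_g2 x y : dotv (g x - g y) (g x - g y) <= L ^+ 2 * dotv (x - y) (x - y).
  exact: enorm_le_sqr (ltW L_gt0) (lipschitz_g x y).
rewrite [energy _ _ _ _ _ _ k]energy_lyap mnag_momentum ?(le_trans _ r_ge2) // natr1 energy_lyap.
exact: lyap_contraction (mnag_x_le f g s r x0 k.+1).
Qed.
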